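(* Let $X=\{x_1,\ldots,x_n\}$ be a set of quantum variables, $q=p_{22}$, and let $\Omega:\mathbf{k}\langle X\rangle\to Sh(W)$ be the algebra homomorphism with $\Omega(x_i)=(x_i)$. Let $m\ge 0$. If $[k]_q\neq0$ and $p_{12}p_{21}\neq q^{1-k}$ for all $1\le k\le m$, then, with $$\{x_1x_2^m\}=\frac{[x_1x_2^m]}{[m]_q!\prod_{s=0}^{m-1}(1-p_{12}p_{21}q^s)},\qquad \{x_2^mx_1\}=\frac{[x_2^mx_1]}{[m]_q!\prod_{s=0}^{m-1}(1-p_{12}p_{21}q^s)},$$ one has $$\Omega(\{x_1x_2^m\})=p_{21}^{-m}q^{\frac{m(1-m)}{2}}(x_2^mx_1),\qquad \Omega(\{x_2^mx_1\})=p_{12}^{-m}q^{\frac{m(1-m)}{2}}(x_1x_2^m).$$ Otherwise $\Omega([x_1x_2^m])=\Omega([x_2^mx_1])=0$.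
   Context: Quantum variables: each $x_i$ is associated with an element $g_i$ of an abelian group $G$ and a character $\chi^i:G\to\mathbf{k}^*$; $p_{ij}=\chi^i(g_j)$, and for words $u,v$, $p(u,v)$ is the bimultiplicative extension. Skew bracket in $\mathbf{k}\langle X\rangle$ for homogeneous $u,v$: $[u,v]=uv-p(u,v)vu$; $[x_1x_2^m]=[\ldots[[x_1,x_2],x_2],\ldots,x_2]$ and $[x_2^mx_1]=[x_2,[x_2,\ldots,[x_2,x_1]\ldots]]$ ($m$ copies of $x_2$). $Sh(W)$ is the tensor space of $W=\mathrm{span}(X)$ with basis the comonomials $(z_1\cdots z_m)$, $z_i\in X$, and the quantum shuffle product: $(u)(v)$ is the sum over all shuffles of the letters of $u$ and $v$ of the resulting comonomial weighted by the product of $p(b,a)^{-1}$ over all pairs with $a$ a letter of $u$, $b$ a letter of $v$, and $b$ placed before $a$. In particular $(w)(x_i)=\sum_{uv=w}p(x_i,v)^{-1}(ux_iv)$ and $(x_i)(w)=\sum_{uv=w}p(u,x_i)^{-1}(ux_iv)$. $[m]_q=1+q+\cdots+q^{m-1}$, $[m]_q!=\prod_{k=1}^m[k]_q$. *)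

From HB Require Import structures.
From mathcomp Require Import all_boot all_order all_algebra.
Set Implicit Arguments. Unset Strict Implicit. Unset Printing Implicit Defensive.
Import Order.TTheory GRing.Theory Num.Theory.
Local Open Scope ring_scope.

(* Quantum variables x_0..x_{n-1} are indexed by 'I_n.  The data (G, g_i, chi^i)
   enters only through the braiding matrix p i j = chi^i(g_j) (nonzero scalars). *)
Section QuantumShuffle.
Variables (k : fieldType) (n : nat) (p : 'I_n -> 'I_n -> k).

Definition word := seq 'I_n.

Definition pw (u v : word) : k := \prod_(i <- u) \prod_(j <- v) p i j.

(* Formal finite linear combinations of words; used both for k<X>
   (words = monomials) and for Sh(W) (words = comonomials).
   Two combinations are identified through their coefficient functions. *)
Definition lc := seq (k * word).
Definition coef (f : lc) (w : word) : k := \sum_(x <- f | x.2 == w) x.1.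

Definition lc_add (f g : lc) : lc := f ++ g.
Definition lc_scale (c : k) (f : lc) : lc := [seq (c * x.1, x.2) | x <- f].
Definition lc_sub (f g : lc) : lc := lc_add f (lc_scale (-1) g).
Definition mono (w : word) : lc := [:: (1, w)].
Definition var (i : 'I_n) : lc := mono [:: i].

Definition lc_mul (f g : lc) : lc := [seq (x.1 * y.1, x.2 ++ y.2) | x <- f, y <- g].

Definition skew (u : lc) (du : word) (v : lc) (dv : word) : lc :=
  lc_sub (lc_mul u v) (lc_scale (pw du dv) (lc_mul v u)).

(* [x_a x_b^m] = [...[[x_a,x_b],x_b],...,x_b] *)
Fixpoint brR (a b : 'I_n) (m : nat) : lc :=
  match m with
  | 0 => var a
  | m'.+1 => skew (brR a b m') (a :: nseq m' b) (var b) [:: b]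
  end.

(* [x_b^m x_a] = [x_b,[x_b,...,[x_b,x_a]...]] *)
Fixpoint brL (a b : 'I_n) (m : nat) : lc :=
  match m with
  | 0 => var a
  | m'.+1 => skew (var b) [:: b] (brL a b m') (nseq m' b ++ [:: a])
  end.

(* quantum shuffle of two comonomials: sum over shuffles, weighted by
   prod p(b,a)^-1 over pairs (a letter of u, b letter of v, b placed before a) *)
Fixpoint shuf (u : word) : word -> lc :=
  match u with
  | [::] => fun v => [:: (1, v)]
  | a :: u' => fix shuf_r (v : word) : lc :=
      match v with
      | [::] => [:: (1, a :: u')]
      | b :: v' =>
          [seq (x.1, a :: x.2) | x <- shuf u' v]
          ++ [seq ((pw [:: b] (a :: u'))^-1 * x.1, b :: x.2) | x <- shuf_r v']
      end
  end.

Definition sh_mul (F G : lc) : lc :=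
  flatten [seq [seq (x.1 * y.1 * z.1, z.2) | z <- shuf x.2 y.2] | x <- F, y <- G].

Definition Omega_word (w : word) : lc :=
  foldr (fun i acc => sh_mul (var i) acc) (mono [::]) w.
Definition Omega (f : lc) : lc :=
  flatten [seq lc_scale x.1 (Omega_word x.2) | x <- f].

Definition qint (q : k) (m : nat) : k := \sum_(i < m) q ^+ i.
Definition qfact (q : k) (m : nat) : k := \prod_(i < m) qint q i.+1.

End QuantumShuffle.

Arguments mono {k n} w.
Arguments var {k n} i.

From Pilot Require Import Defs.
From mathcomp Require Import all_boot all_order all_algebra.
From mathcomp Require Import ring.
Import GRing.Theory.

Set Implicit Arguments.
Unset Strict Implicit.
Unset Printing Implicit Defensive.
Local Open Scope ring_scope.

(* Pair linear combinations of words with arbitrary functions [phi : word -> k];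
   coefficients are the pairings with indicator functions.  Against such a
   pairing, Omega (c :: w) acts on [phi] by shuffling with the letter (c) on the
   left and Omega (w ++ [:: b]) by shuffling with (b) on the right, and these
   two actions commute.  Unfolding the recursive definitions of the brackets,
   Omega [x_a x_b^m] is then a scalar c_m times the single comonomial
   (x_b^m x_a), with c_(m+1) = c_m [m+1]_(q^-1) (p_ba^-1 - p_ab q^m); solving
   the recursion gives c_m = D / (p_ba^m q^(m(m-1)/2)), where D is the
   denominator of the statement, and D != 0 is exactly the nondegeneracy
   condition.  The same computation with p_ab and p_ba exchanged handles
   [x_b^m x_a]. *)

Section Pairing.
Variables (k : fieldType) (n : nat).
Implicit Types (f g : lc k n) (phi psi : word n -> k) (w : word n).

Definition lcev f phi : k := \sum_(x <- f) x.1 * phi x.2.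

Lemma lcev_ext f phi psi : phi =1 psi -> lcev f phi = lcev f psi.
Proof. by move=> eq_phi; apply: eq_bigr => x _; rewrite eq_phi. Qed.

Lemma lcev_add f phi psi : lcev f (fun z => phi z + psi z) = lcev f phi + lcev f psi.
Proof. by rewrite /lcev -big_split; apply: eq_bigr => x _; rewrite mulrDr. Qed.

Lemma lcev_scalel f c phi : lcev f (fun z => c * phi z) = c * lcev f phi.
Proof. by rewrite /lcev mulr_sumr; apply: eq_bigr => x _; rewrite mulrCA. Qed.

Lemma lcev_cat f g phi : lcev (f ++ g) phi = lcev f phi + lcev g phi.
Proof. exact: big_cat. Qed.

Lemma lcev_scale c f phi : lcev (lc_scale c f) phi = c * lcev f phi.
Proof.
by rewrite /lcev big_map mulr_sumr; apply: eq_bigr => x _ /=; rewrite mulrA.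
Qed.

Lemma lcev_sub f g phi : lcev (lc_sub f g) phi = lcev f phi - lcev g phi.
Proof. by rewrite /lc_sub /lc_add lcev_cat lcev_scale mulN1r. Qed.

Lemma lcev_mono w phi : lcev (mono w) phi = phi w.
Proof. by rewrite /lcev big_seq1 mul1r. Qed.

Lemma lcev_var i phi : lcev (var i) phi = phi [:: i].
Proof. exact: lcev_mono. Qed.

Lemma lcev_mul f g phi :
  lcev (lc_mul f g) phi = lcev f (fun u => lcev g (fun v => phi (u ++ v))).
Proof.
rewrite /lcev /lc_mul big_flatten big_map; apply: eq_bigr => x _.
by rewrite big_map mulr_sumr; apply: eq_bigr => y _ /=; rewrite mulrA.
Qed.

Lemma coef_lcev f w : coef f w = lcev f (fun u => (u == w)%:R).
Proof.
rewrite /coef /lcev big_mkcond; apply: eq_bigr => x _.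
by case: (x.2 == w); rewrite ?mulr1 ?mulr0.
Qed.

Lemma coef_scale c f w : coef (lc_scale c f) w = c * coef f w.
Proof. by rewrite !coef_lcev lcev_scale. Qed.

Lemma coef_mono w w' : coef (mono w : lc k n) w' = (w == w')%:R.
Proof. by rewrite coef_lcev lcev_mono. Qed.

End Pairing.

Section QuantumInteger.
Variable k : fieldType.
Implicit Types (q x : k).

Lemma prod_nseq (I : Type) (F : I -> k) m c : \prod_(i <- nseq m c) F i = F c ^+ m.
Proof. by elim: m => [|m IH]; rewrite ?big_nil // big_cons IH exprS. Qed.

Lemma qintS q m : qint q m.+1 = qint q m + q ^+ m.
Proof. by rewrite /qint big_ord_recr. Qed.

Lemma qintSl q m : qint q m.+1 = 1 + q * qint q m.
Proof.
rewrite /qint big_ord_recl expr0 mulr_sumr; congr (_ + _).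
by apply: eq_bigr => i _; rewrite exprS.
Qed.

Lemma qint1 q : qint q 1 = 1.
Proof. by rewrite qintS /qint big_ord0 add0r. Qed.

Lemma qintV q m : q != 0 -> q ^+ m * qint q^-1 m.+1 = qint q m.+1.
Proof.
move=> q_neq0; elim: m => [|m IH]; first by rewrite mul1r !qint1.
rewrite (qintS _ m.+1) (qintSl q m.+1) -IH mulrDr exprVn mulfV ?expf_neq0 //.
by rewrite exprS mulrA addrC.
Qed.

Lemma half_triangularS m : (m.+1 * (m.+1 - 1))./2 = ((m * (m - 1))./2 + m)%N.
Proof. by rewrite !subn1 -!bin2 binS bin1 addnC. Qed.

Lemma qdenom_neq0P q x m : q != 0 ->
  qfact q m * \prod_(s < m) (1 - x * q ^+ s) != 0 <->
  (forall j, (1 <= j <= m)%N -> qint q j != 0 /\ x != (q ^+ j.-1)^-1).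
Proof.
move=> q_neq0; have qX_neq0 s : q ^+ s != 0 by rewrite expf_neq0.
rewrite mulf_eq0 negb_or; split.
  case/andP=> /prodf_neq0 qfact_neq0 /prodf_neq0 prod_neq0.
  case=> [|i] //= lt_im; split; first exact: qfact_neq0 (Ordinal lt_im) _.
  apply: contra (prod_neq0 (Ordinal lt_im) isT) => /eqP /= ->.
  by rewrite mulVf ?subrr.
move=> good; apply/andP; split; apply/prodf_neq0 => i _.
  by case: (good i.+1 (ltn_ord i)).
have [_] := good i.+1 (ltn_ord i); apply: contra; rewrite subr_eq0 => /eqP x_qi.
by apply/eqP; apply: (mulIf (qX_neq0 i)); rewrite /= mulVf // -x_qi.
Qed.

Fixpoint brcoef q (u v : k) m : k :=
  if m is m'.+1 then brcoef q u v m' * qint q^-1 m * (v^-1 - u * q ^+ m') else 1.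

Lemma brcoefE q u v m : q != 0 -> v != 0 -> brcoef q u v m =
  (v ^+ m)^-1 * (q ^+ (m * (m - 1))./2)^-1 *
  (qfact q m * \prod_(s < m) (1 - u * v * q ^+ s)).
Proof.
move=> q_neq0 v_neq0; elim: m => [|m IH].
  by rewrite /= invr1 /qfact !big_ord0 !mulr1.
rewrite /= IH half_triangularS /qfact !big_ord_recr /= -/(qfact q m) -(qintV m q_neq0).
have qX_neq0 s : q ^+ s != 0 by rewrite expf_neq0.
rewrite !exprS exprD !invfM.
by field; rewrite !qX_neq0 v_neq0 expf_neq0.
Qed.

End QuantumInteger.

Section ShufflePairing.
Variables (k : fieldType) (n : nat) (p : 'I_n -> 'I_n -> k).
Hypothesis p_neq0 : forall i j, p i j != 0.
Implicit Types (phi psi : word n -> k) (u v w y : word n).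

Definition Omega_ev w phi := lcev (Omega_word p w) phi.
Definition shufl_ev c phi y := lcev (shuf p [:: c] y) phi.
Definition shufr_ev b phi y := lcev (shuf p y [:: b]) phi.

Lemma lcev_sh_mul F G phi : lcev (sh_mul p F G) phi =
  lcev F (fun u => lcev G (fun v => lcev (shuf p u v) phi)).
Proof.
rewrite /lcev /sh_mul big_flatten /= big_flatten big_map; apply: eq_bigr => x _.
rewrite big_map mulr_sumr; apply: eq_bigr => y _ /=.
rewrite big_map !mulr_sumr; apply: eq_bigr => z _ /=; by rewrite !mulrA.
Qed.

Lemma lcev_Omega f phi : lcev (Omega p f) phi = lcev f (Omega_ev^~ phi).
Proof.
rewrite /lcev /Omega big_flatten big_map; apply: eq_bigr => x _.
exact: lcev_scale.
Qed.

Lemma coef_Omega_scale c f w : coef (Omega p (lc_scale c f)) w = c * coef (Omega p f) w.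
Proof. by rewrite !coef_lcev !lcev_Omega lcev_scale. Qed.

Lemma pw_seq1 i j : pw p [:: i] [:: j] = p i j.
Proof. by rewrite /pw !big_seq1. Qed.

Lemma pw_seq1l i w : pw p [:: i] w = \prod_(j <- w) p i j.
Proof. exact: big_seq1. Qed.

Lemma pw_seq1r u j : pw p u [:: j] = \prod_(i <- u) p i j.
Proof. by apply: eq_bigr => i _; rewrite big_seq1. Qed.

Lemma pw_seq1l_cons i d w : pw p [:: i] (d :: w) = p i d * pw p [:: i] w.
Proof. by rewrite !pw_seq1l big_cons. Qed.

Lemma pw_seq1l_neq0 i w : pw p [:: i] w != 0.
Proof. by rewrite pw_seq1l prodf_seq_neq0; apply/allP => j _; apply: p_neq0. Qed.

Lemma shufl_ev_nil c phi : shufl_ev c phi [::] = phi [:: c].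
Proof. by rewrite /shufl_ev /lcev big_seq1 mul1r. Qed.

Lemma shufl_ev_cons c phi d v : shufl_ev c phi (d :: v) =
  phi [:: c, d & v] + (p d c)^-1 * shufl_ev c (fun z => phi (d :: z)) v.
Proof.
rewrite /shufl_ev /lcev big_cons /= mul1r big_map pw_seq1 mulr_sumr.
by congr (_ + _); apply: eq_bigr => x _ /=; rewrite mulrA.
Qed.

Lemma shufr_ev_nil b phi : shufr_ev b phi [::] = phi [:: b].
Proof. by rewrite /shufr_ev /lcev big_seq1 mul1r. Qed.

Lemma shufr_ev_cons b phi d u : shufr_ev b phi (d :: u) =
  shufr_ev b (fun z => phi (d :: z)) u + (pw p [:: b] (d :: u))^-1 * phi [:: b, d & u].
Proof.
rewrite /shufr_ev; have -> : shuf p (d :: u) [:: b] = [seq (x.1, d :: x.2) | x <- shuf p u [:: b]]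
    ++ [:: ((pw p [:: b] (d :: u))^-1 * 1, [:: b, d & u])] by case: u.
by rewrite lcev_cat /lcev big_map big_seq1 mulr1.
Qed.

Lemma shufl_ev_ext c phi psi y : phi =1 psi -> shufl_ev c phi y = shufl_ev c psi y.
Proof. exact: lcev_ext. Qed.

Lemma shufr_ev_ext b phi psi y : phi =1 psi -> shufr_ev b phi y = shufr_ev b psi y.
Proof. exact: lcev_ext. Qed.

Lemma shufl_ev_add c phi psi y :
  shufl_ev c (fun z => phi z + psi z) y = shufl_ev c phi y + shufl_ev c psi y.
Proof. exact: lcev_add. Qed.

Lemma shufl_ev_scalel c x phi y : shufl_ev c (fun z => x * phi z) y = x * shufl_ev c phi y.
Proof. exact: lcev_scalel. Qed.

Lemma shufr_ev_add b phi psi y :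
  shufr_ev b (fun z => phi z + psi z) y = shufr_ev b phi y + shufr_ev b psi y.
Proof. exact: lcev_add. Qed.

Lemma shufr_ev_scalel b x phi y : shufr_ev b (fun z => x * phi z) y = x * shufr_ev b phi y.
Proof. exact: lcev_scalel. Qed.

Lemma shufl_ev_pw b c phi u :
  shufl_ev c (fun z => (pw p [:: b] z)^-1 * phi z) u
  = (pw p [:: b] (c :: u))^-1 * shufl_ev c phi u.
Proof.
elim: u phi => [|d u IH] phi; first by rewrite !shufl_ev_nil.
rewrite !shufl_ev_cons (@shufl_ev_ext c _
  (fun z => (p b d)^-1 * ((pw p [:: b] z)^-1 * phi (d :: z)))); last first.
  by move=> z; rewrite pw_seq1l_cons invfM mulrA.
rewrite shufl_ev_scalel IH !pw_seq1l_cons.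
by field; rewrite !p_neq0 pw_seq1l_neq0.
Qed.

(* The pairing form of the associativity ((c) y) (b) = (c) (y (b)) in Sh(W). *)
Lemma shufr_shufl_ev b c phi y :
  shufr_ev b (shufl_ev c phi) y = shufl_ev c (shufr_ev b phi) y.
Proof.
elim: y phi => [|d u IH] phi.
  rewrite shufr_ev_nil shufl_ev_nil shufl_ev_cons shufl_ev_nil.
  by rewrite (shufr_ev_cons b phi c [::]) shufr_ev_nil pw_seq1 addrC.
rewrite (shufr_ev_cons b (shufl_ev c phi)) (@shufr_ev_ext b _ (fun z =>
  phi [:: c, d & z] + (p d c)^-1 * shufl_ev c (fun z' => phi (d :: z')) z)); last first.
  by move=> z; rewrite shufl_ev_cons.
rewrite shufr_ev_add shufr_ev_scalel IH !shufl_ev_cons.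
rewrite (@shufl_ev_ext c (fun z => shufr_ev b phi (d :: z)) (fun z =>
  shufr_ev b (fun z' => phi (d :: z')) z
  + (p b d)^-1 * ((pw p [:: b] z)^-1 * phi [:: b, d & z]))); last first.
  by move=> z; rewrite shufr_ev_cons pw_seq1l_cons invfM mulrA.
rewrite shufl_ev_add shufl_ev_scalel (shufl_ev_pw b c).
rewrite (shufr_ev_cons b phi c) (shufr_ev_cons b (fun z => phi (c :: z))).
rewrite !pw_seq1l_cons.
by field; rewrite !p_neq0 pw_seq1l_neq0.
Qed.

Lemma Omega_ev_nil phi : Omega_ev [::] phi = phi [::].
Proof. exact: lcev_mono. Qed.

Lemma Omega_ev_cons c w phi : Omega_ev (c :: w) phi = Omega_ev w (shufl_ev c phi).
Proof. by rewrite /Omega_ev /= lcev_sh_mul lcev_var. Qed.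

Lemma Omega_ev_rcons w b phi : Omega_ev (w ++ [:: b]) phi = Omega_ev w (shufr_ev b phi).
Proof.
elim: w phi => [|c w IH] phi /=.
  by rewrite Omega_ev_cons !Omega_ev_nil shufl_ev_nil shufr_ev_nil.
rewrite !Omega_ev_cons IH; apply: lcev_ext => z; exact: shufr_shufl_ev.
Qed.

Lemma lcev_Omega_mulr_var f b phi :
  lcev (lc_mul f (var b)) (Omega_ev^~ phi) = lcev f (Omega_ev^~ (shufr_ev b phi)).
Proof.
by rewrite lcev_mul; apply: lcev_ext => u; rewrite lcev_var Omega_ev_rcons.
Qed.

Lemma lcev_Omega_mull_var f c phi :
  lcev (lc_mul (var c) f) (Omega_ev^~ phi) = lcev f (Omega_ev^~ (shufl_ev c phi)).
Proof.
by rewrite lcev_mul lcev_var; apply: lcev_ext => u; rewrite Omega_ev_cons.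
Qed.

End ShufflePairing.

Section Brackets.
Variables (k : fieldType) (n : nat) (p : 'I_n -> 'I_n -> k).
Hypothesis p_neq0 : forall i j, p i j != 0.
Variables a b : 'I_n.
Implicit Type phi : word n -> k.
Let q := p b b.

Lemma shufl_ev_nseq phi m :
  shufl_ev p b phi (nseq m b) = qint q^-1 m.+1 * phi (nseq m.+1 b).
Proof.
elim: m phi => [|m IH] phi; first by rewrite shufl_ev_nil qint1 mul1r.
by rewrite shufl_ev_cons IH (qintSl _ m.+1) mulrDl mul1r mulrA.
Qed.

Lemma shufr_ev_nseq phi m :
  shufr_ev p b phi (nseq m b) = qint q^-1 m.+1 * phi (nseq m.+1 b).
Proof.
elim: m phi => [|m IH] phi; first by rewrite shufr_ev_nil qint1 mul1r.
by rewrite shufr_ev_cons IH (qintS _ m.+1) pw_seq1l (prod_nseq _ m.+1) -exprVn mulrDl.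
Qed.

Lemma shufl_ev_nseq_rcons phi m : shufl_ev p b phi (nseq m b ++ [:: a]) =
  qint q^-1 m.+1 * phi (nseq m.+1 b ++ [:: a])
  + (p a b)^-1 * q^-1 ^+ m * phi (nseq m b ++ [:: a; b]).
Proof.
elim: m phi => [|m IH] phi.
  by rewrite /= shufl_ev_cons shufl_ev_nil qint1 mul1r mulr1.
rewrite [nseq m.+1 b ++ _]/= shufl_ev_cons IH (qintSl _ m.+1) exprS -/q.
ring.
Qed.

Lemma shufr_ev_nseq_rcons phi m : shufr_ev p b phi (nseq m b ++ [:: a]) =
  phi (nseq m b ++ [:: a; b])
  + (p b a)^-1 * qint q^-1 m.+1 * phi (nseq m.+1 b ++ [:: a]).
Proof.
elim: m phi => [|m IH] phi.
  by rewrite /= shufr_ev_cons shufr_ev_nil qint1 mulr1 pw_seq1.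
rewrite [nseq m.+1 b ++ _]/= shufr_ev_cons IH (qintS _ m.+1).
rewrite pw_seq1l big_cons big_cat /= prod_nseq big_seq1 -/q.
rewrite !invfM -exprVn exprS.
ring.
Qed.

Lemma shufl_ev_cons_nseq phi m : shufl_ev p b phi (a :: nseq m b) =
  phi [:: b, a & nseq m b] + (p a b)^-1 * qint q^-1 m.+1 * phi (a :: nseq m.+1 b).
Proof. by rewrite shufl_ev_cons shufl_ev_nseq mulrA. Qed.

Lemma shufr_ev_cons_nseq phi m : shufr_ev p b phi (a :: nseq m b) =
  qint q^-1 m.+1 * phi (a :: nseq m.+1 b) + (p b a * q ^+ m)^-1 * phi [:: b, a & nseq m b].
Proof. by rewrite shufr_ev_cons shufr_ev_nseq pw_seq1l big_cons prod_nseq. Qed.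

Lemma Omega_brR_ev m phi : lcev (brR p a b m) (Omega_ev p ^~ phi)
  = brcoef q (p a b) (p b a) m * phi (nseq m b ++ [:: a]).
Proof.
elim: m phi => [|m IH] phi.
  by rewrite /= lcev_var Omega_ev_cons Omega_ev_nil shufl_ev_nil mul1r.
rewrite /= /Defs.skew lcev_sub lcev_scale lcev_Omega_mull_var lcev_Omega_mulr_var //.
rewrite !IH shufr_ev_nseq_rcons shufl_ev_nseq_rcons pw_seq1r big_cons prod_nseq -/q.
have qX_neq0 : q ^+ m != 0 := expf_neq0 m (p_neq0 b b).
by rewrite exprVn /=; field; rewrite qX_neq0 (p_neq0 a b) (p_neq0 b a).
Qed.

Lemma Omega_brL_ev m phi : lcev (brL p a b m) (Omega_ev p ^~ phi)
  = brcoef q (p b a) (p a b) m * phi (a :: nseq m b).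
Proof.
elim: m phi => [|m IH] phi.
  by rewrite /= lcev_var Omega_ev_cons Omega_ev_nil shufl_ev_nil mul1r.
rewrite /= /Defs.skew lcev_sub lcev_scale lcev_Omega_mull_var lcev_Omega_mulr_var //.
rewrite !IH shufr_ev_cons_nseq shufl_ev_cons_nseq pw_seq1l big_cat prod_nseq big_seq1 -/q.
have qX_neq0 : q ^+ m != 0 := expf_neq0 m (p_neq0 b b).
by rewrite /=; field; rewrite qX_neq0 (p_neq0 a b) (p_neq0 b a).
Qed.

End Brackets.

Theorem lemma3p2 (k : fieldType) (n : nat) (p : 'I_n -> 'I_n -> k)
  (hp : forall i j, p i j != 0) (a b : 'I_n) (hab : a != b) (m : nat) :
  let q := p b b in
  let D := qfact q m * \prod_(s < m) (1 - p a b * p b a * q ^+ s) in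
  let good := forall j : nat, (1 <= j <= m)%N ->
                qint q j != 0 /\ p a b * p b a != (q ^+ j.-1)^-1 in
  (good ->
     (forall w, coef (Omega p (lc_scale D^-1 (brR p a b m))) w
        = coef (lc_scale ((p b a ^+ m)^-1 * (q ^+ (m * (m - 1))./2)^-1)
                         (mono (nseq m b ++ [:: a]))) w) /\
     (forall w, coef (Omega p (lc_scale D^-1 (brL p a b m))) w
        = coef (lc_scale ((p a b ^+ m)^-1 * (q ^+ (m * (m - 1))./2)^-1)
                         (mono (a :: nseq m b))) w)) /\
  (~ good ->
     (forall w, coef (Omega p (brR p a b m)) w = 0) /\
     (forall w, coef (Omega p (brL p a b m)) w = 0)).
Proof.
move=> q D good; have q_neq0 : q != 0 := hp b b.
have coefR w : coef (Omega p (brR p a b m)) w = D *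
    ((p b a ^+ m)^-1 * (q ^+ (m * (m - 1))./2)^-1 * ((nseq m b ++ [:: a]) == w)%:R).
  by rewrite coef_lcev lcev_Omega Omega_brR_ev // brcoefE ?hp // /D; ring.
have coefL w : coef (Omega p (brL p a b m)) w = D *
    ((p a b ^+ m)^-1 * (q ^+ (m * (m - 1))./2)^-1 * ((a :: nseq m b) == w)%:R).
  rewrite coef_lcev lcev_Omega Omega_brL_ev // brcoefE ?hp // /D.
  under eq_bigr do rewrite [p b a * _]mulrC.
  ring.
have good_D : D != 0 <-> good := qdenom_neq0P _ _ q_neq0.
split=> [/good_D D_neq0 | bad].
  by split=> w; rewrite coef_Omega_scale ?coefR ?coefL mulKf // coef_scale coef_mono.
have D0 : D = 0 := contra_not_eq (fun D_neq0 => proj1 good_D D_neq0) bad.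
by split=> w; rewrite ?coefR ?coefL D0 mul0r.
Qed.
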